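(* Let $H=kQ_H$ be a representation-finite hereditary (path) algebra over an algebraically closed field $k$, and let $f\colon X\to Y$ be a non-zero morphism between projective $H$-modules. Then there exist a sink $i$ and a source $j$ of $Q_H$ and morphisms $\alpha\colon P_i\to X$, $\beta\colon Y\to P_j$ such that $\beta f\alpha$ is a non-zero monomorphism.
   Context: $P_a$ denotes the indecomposable projective right $H$-module corresponding to the vertex $a$ of $Q_H$. A sink is a vertex with no outgoing arrows; a source is a vertex with no incoming arrows. *)

(* Finite-dimensional right modules over the path algebra kQ
   are modelled as finite-dimensional representations of the quiver Q
   (convention of Assem-Simson-Skowronski: P_a has basis the paths starting
   at a, so P_a is simple iff a is a sink). *)
From HB Require Import structures.
From mathcomp Require Import all_boot all_order all_algebra.
Set Implicit Arguments.
Unset Strict Implicit.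
Unset Printing Implicit Defensive.
Import GRing.Theory.
Local Open Scope ring_scope.

Section Quiver.
Variables (k : fieldType) (V E : finType) (src tgt : E -> V).

(* a finite-dimensional representation: a vector space k^(rdim a) at each
   vertex a, and for each arrow e : src e -> tgt e a linear map, acting on
   row vectors by right multiplication v |-> v *m rmap e *)
Record rep := Rep {
  rdim : V -> nat;
  rmap : forall e : E, 'M[k]_(rdim (src e), rdim (tgt e)) }.

Definition homfam (M N : rep) := forall a : V, 'M[k]_(rdim M a, rdim N a).

Definition is_hom (M N : rep) (f : homfam M N) : Prop :=
  forall e : E, rmap M e *m f (tgt e) = f (src e) *m rmap N e.

(* composition "f then g" (written g o f in the paper) *)
Definition hcomp (M N L : rep) (f : homfam M N) (g : homfam N L) : homfam M L :=
  fun a => f a *m g a.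

Definition hid (M : rep) : homfam M M := fun a => 1%:M.

Definition heq (M N : rep) (f g : homfam M N) : Prop := forall a, f a = g a.

Definition hom_nonzero (M N : rep) (f : homfam M N) : Prop := exists a, f a != 0.

Definition is_mono (M N : rep) (f : homfam M N) : Prop := forall a, row_free (f a).
Definition is_epi (M N : rep) (f : homfam M N) : Prop := forall a, row_full (f a).

Definition projective (P : rep) : Prop :=
  forall (N N' : rep) (g : homfam N N'), is_hom g -> is_epi g ->
  forall h : homfam P N', is_hom h ->
  exists l : homfam P N, is_hom l /\ heq (hcomp l g) h.

(* (P, e) is the indecomposable projective P_a = e_a kQ: it represents the
   functor M |-> M e_a = M_a, with universal element e = e_a in P_a. *)
Definition is_Pa (a : V) (P : rep) (e : 'rV[k]_(rdim P a)) : Prop :=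
  forall (M : rep) (m : 'rV[k]_(rdim M a)),
    (exists phi : homfam P M, is_hom phi /\ e *m phi a = m) /\
    (forall phi psi : homfam P M, is_hom phi -> is_hom psi ->
       e *m phi a = m -> e *m psi a = m -> heq phi psi).

Definition rep_iso (M N : rep) : Prop :=
  exists (f : homfam M N) (g : homfam N M),
    [/\ is_hom f, is_hom g, heq (hcomp f g) (hid M) & heq (hcomp g f) (hid N)].

Definition indecomposable (M : rep) : Prop :=
  (0 < \sum_(a : V) rdim M a)%N /\
  forall phi : homfam M M, is_hom phi -> heq (hcomp phi phi) phi ->
    (forall a, phi a = 0) \/ heq phi (hid M).

Definition rep_finite : Prop :=
  exists (n : nat) (L : 'I_n -> rep),
    forall M : rep, indecomposable M -> exists i : 'I_n, rep_iso M (L i).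

Definition acyclic : Prop :=
  forall p : seq E, p != [::] -> ~~ cycle (fun e1 e2 => tgt e1 == src e2) p.

Definition is_sink (i : V) : Prop := forall e : E, src e != i.
Definition is_source (j : V) : Prop := forall e : E, tgt e != j.

End Quiver.

From mathcomp Require Import all_boot all_order all_algebra.
Set Implicit Arguments.
Unset Strict Implicit.
Unset Printing Implicit Defensive.
Import GRing.Theory.
Local Open Scope ring_scope.

(* Pick x with x f != 0.  Arrows act injectively on the projective Y, so x can
   be pushed forward along arrows keeping x f != 0; by acyclicity this stops at
   a sink i, and x defines alpha : P_i -> X.  A projective is cogenerated by the
   P_a, which gives pi : Y -> P_a not killing x f; composing with the monos
   P_(tgt e) -> P_(src e) walks backwards to a source j.  As P_i is simple for a
   sink i, the non-zero map beta f alpha is mono. *)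

Lemma path_not_uniq_cycle (T : eqType) (r : rel T) (x : T) (p : seq T) :
  path r x p -> ~~ uniq (x :: p) -> exists2 c : seq T, c != [::] & cycle r c.
Proof.
elim: p x => [|y p IHp] x // pth.
rewrite [uniq _]/= negb_and negbK => /orP[x_in|]; last first.
  by apply: IHp; case/andP: pth.
move: pth; case/splitPr: x_in => p1 p2.
rewrite cat_path => /andP[pth1 /= /andP[rx _]].
by exists (x :: p1); rewrite //= rcons_path pth1.
Qed.

Section AcyclicQuiver.
Variables (V E : finType) (src tgt : E -> V).
Hypothesis acyc : acyclic src tgt.

Local Notation composable := (fun e1 e2 : E => tgt e1 == src e2).

Lemma acyclic_path_uniq (e : E) (p : seq E) : path composable e p -> uniq (e :: p).
Proof.
move=> pth; apply/negPn/negP => /(path_not_uniq_cycle pth)[c c0 cyc].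
by move: (acyc c0); rewrite cyc.
Qed.

Lemma acyclic_reach_sink (Pr : V -> Prop) :
  (forall e, Pr (src e) -> Pr (tgt e)) ->
  forall a, Pr a -> exists2 i, is_sink src i & Pr i.
Proof.
move=> Pr_tgt a Pa.
suff reach n b : Pr b -> (forall e p, src e = b -> path composable e p -> size p < n)%N ->
    exists2 i, is_sink src i & Pr i.
  apply: (reach #|E| a Pa) => e p _ /acyclic_path_uniq/card_uniqP size_ep.
  by have := max_card (mem (e :: p)); rewrite size_ep.
elim: n b => [|n IHn] b Pb short.
all: case: (pickP (fun e => src e == b)) => [e /eqP eb|no_out]; last first.
all: try by exists b => // e; rewrite no_out.
  by have := short e [::] eb isT.
apply: (IHn (tgt e)); first by apply: Pr_tgt; rewrite eb.
move=> e' p e'e pth; have := short e (e' :: p) eb.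
by rewrite /= e'e eqxx pth; apply.
Qed.

End AcyclicQuiver.

Lemma acyclic_opp (V E : finType) (src tgt : E -> V) :
  acyclic src tgt -> acyclic tgt src.
Proof.
move=> acyc c c0; have := acyc (rev c); rewrite rev_cycle.
rewrite (@eq_cycle _ _ (fun e1 e2 => src e1 == tgt e2)) => [|e1 e2]; last exact: eq_sym.
by apply; apply: contra c0; rewrite -!nilpE rev_nilp.
Qed.

Section Representations.
Variables (k : fieldType) (V E : finType) (src tgt : E -> V).
Local Notation rep := (rep k src tgt).

Lemma is_hom_hcomp (M N L : rep) (f : homfam M N) (g : homfam N L) :
  is_hom f -> is_hom g -> is_hom (hcomp f g).
Proof. by move=> homf homg e; rewrite /hcomp mulmxA homf -!mulmxA homg. Qed.

Lemma is_hom_hid (M : rep) : is_hom (hid M).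
Proof. by move=> e; rewrite /hid mulmx1 mul1mx. Qed.

Lemma projective_rmap_free (Y : rep) : projective Y -> forall e, row_free (rmap Y e).
Proof.
(* N adds to Y a copy of Y_s at each vertex, fed by the arrow e0 only; the
   second component of a section of the projection N -> Y inverts rmap Y e0. *)
move=> projY e0; pose s := src e0.
pose N : rep := @Rep _ _ _ src tgt (fun x => rdim Y x + rdim Y s)%N
  (fun e => block_mx (rmap Y e) (if e == e0 then pid_mx (rdim Y s) else 0) 0 0).
pose g : homfam N Y := fun x => col_mx 1%:M 0.
have homg : is_hom g.
  move=> e; rewrite /g /= mul_block_col mul_col_mx.
  by rewrite !mulmx1 !mulmx0 !mul0mx !addr0 mul1mx.
have epig : is_epi g.
  by move=> x; rewrite -sub1mx -addsmxE; apply: submx_trans (addsmxSl _ 0) _.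
have [l [homl lg]] := projY N Y g homg epig (hid Y) (is_hom_hid Y).
have lsub1 x : lsubmx (l x) = 1%:M.
  have := lg x; rewrite /hcomp /g /hid -[l x]hsubmxK mul_row_col.
  by rewrite mulmx1 mulmx0 addr0 row_mxKl.
have := homl e0; rewrite -[l (tgt e0)]hsubmxK -[l (src e0)]hsubmxK.
rewrite mul_mx_row /= mul_row_block eqxx pid_mx_1 => /eq_row_mx[_].
rewrite lsub1 mulmx0 addr0 mul1mx => rinv.
by apply/row_freeP; exists (rsubmx (l (tgt e0))).
Qed.

Definition rep_dsum (M N : rep) : rep := @Rep _ _ _ src tgt
  (fun c => rdim M c + rdim N c)%N (fun e => block_mx (rmap M e) 0 0 (rmap N e)).

Definition hcopair {M N L : rep} (f : homfam M L) (g : homfam N L) :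
  homfam (rep_dsum M N) L := fun c => col_mx (f c) (g c).

Lemma is_hom_hcopair (M N L : rep) (f : homfam M L) (g : homfam N L) :
  is_hom f -> is_hom g -> is_hom (hcopair f g).
Proof.
move=> homf homg e; rewrite /hcopair mul_block_col mul_col_mx.
by rewrite !mul0mx addr0 add0r homf homg.
Qed.

Lemma is_hom0 (M N : rep) : is_hom (fun c => 0 : 'M_(rdim M c, rdim N c)).
Proof. by move=> e; rewrite mulmx0 mul0mx. Qed.

Section IndecomposableProjectives.
Variables (P : V -> rep) (eP : forall a, 'rV[k]_(rdim (P a) a)).
Hypothesis Pa_univ : forall a, is_Pa (eP a).

Lemma Pa_arrow_mono (e : E) :
  exists2 psi : homfam (P (tgt e)) (P (src e)), is_hom psi & is_mono psi.
Proof.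
(* psi is multiplication by the arrow e.  M' attaches to P a a copy of (P a)_a at
   every vertex, mapped identically into (P a)_a by e and killed by all other
   arrows; psi followed by the map P_c -> M' picking the attached copy of e_a
   at c is the inclusion of P a, hence psi is injective. *)
pose a := tgt e; pose c := src e; pose M := P a.
have [[psi [homp psiE]] _] := @Pa_univ a (P c) (eP c *m rmap (P c) e).
exists psi => // b; apply: inj_row_free => u upsi0.
pose M' : rep := @Rep _ _ _ src tgt (fun x => rdim M x + rdim M a)%N
  (fun e' => block_mx (rmap M e') 0 (if e' == e then pid_mx (rdim M a) else 0) 0).
pose iota : homfam M M' := fun x => row_mx 1%:M 0.
have homi : is_hom iota.
  move=> e'; rewrite /iota /= mul_mx_row mul_row_block.
  by rewrite !mulmx0 !mul0mx !mul1mx !mulmx1 !addr0.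
have [[phi [homf phiE]] _] := @Pa_univ c M' (row_mx 0 (eP a)).
have psiphi : heq (hcomp psi phi) iota.
  apply: (@Pa_univ a M' (row_mx (eP a) 0)).2; first exact: is_hom_hcomp.
  - exact: homi.
  - rewrite /hcomp mulmxA psiE -mulmxA homf mulmxA phiE /= mul_row_block eqxx.
    by rewrite pid_mx_1 !mulmx0 !mul0mx !mulmx1 !add0r.
  - by rewrite /iota mul_mx_row mulmx1 mulmx0.
have : u *m iota b = 0 by rewrite -psiphi /hcomp mulmxA upsi0 mul0mx.
by rewrite /iota mul_mx_row mulmx1 mulmx0 => /eqP; rewrite row_mx_eq0 => /andP[/eqP].
Qed.

Lemma Pa_sink_rdim (i : V) : is_sink src i -> forall b, (rdim (P i) b <= (b == i))%N.
Proof.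
(* P_i is a retract of S (k at every vertex, zero arrows) through e_i |-> 1; the
   section can be concentrated at i because no arrow leaves i. *)
move=> sink_i b.
pose S : rep := @Rep _ _ _ src tgt (fun _ => 1%N) (fun _ => 0).
pose sig : homfam S (P i) := fun x => (x == i)%:R *: conform_mx 0 (eP i).
have homs : is_hom sig.
  by move=> e; rewrite /sig (negbTE (sink_i e)) scale0r !mul0mx.
have sigi : sig i = eP i by rewrite /sig eqxx scale1r conform_mx_id.
have [[phi [homf phiE]] _] := @Pa_univ i S 1%:M.
have phisig : heq (hcomp phi sig) (hid (P i)).
  apply: (@Pa_univ i (P i) (eP i)).2; first exact: is_hom_hcomp.
  - exact: is_hom_hid.
  - by rewrite /hcomp mulmxA phiE mul1mx sigi.
  - by rewrite /hid mulmx1.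
rewrite -(mxrank1 k (rdim (P i) b)) -[1%:M](phisig b).
apply: leq_trans (mxrankM_maxr _ _) _.
by rewrite /sig; case: eqP => _; rewrite ?scale0r ?mxrank0 ?rank_leq_row.
Qed.

Lemma Pa_sink_mono (i : V) (M : rep) (th : homfam (P i) M) :
  is_sink src i -> eP i *m th i != 0 -> is_mono th.
Proof.
move=> sink_i nz b; rewrite -row_leq_rank.
have := Pa_sink_rdim sink_i b; case: eqVneq => [->|_] dim; last first.
  exact: leq_trans dim (leq0n _).
apply: leq_trans dim _; rewrite lt0n mxrank_eq0.
by apply: contraNneq nz => ->; rewrite mulmx0.
Qed.

Definition Pa_cogenerated (M : rep) : Prop :=
  forall c (v : 'rV_(rdim M c)), v != 0 ->
    exists a (pi : homfam M (P a)), is_hom pi /\ v *m pi c != 0.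

Lemma Pa_cogenerated_Pa a : Pa_cogenerated (P a).
Proof.
by move=> c v nz; exists a, (hid (P a)); split; [exact: is_hom_hid | rewrite /hid mulmx1].
Qed.

Lemma Pa_cogenerated_dsum (M N : rep) :
  Pa_cogenerated M -> Pa_cogenerated N -> Pa_cogenerated (rep_dsum M N).
Proof.
move=> cogM cogN c v; rewrite -[v]hsubmxK row_mx_eq0 negb_and => /orP[nzl|nzr].
- have [a [pi [hompi piv]]] := cogM c _ nzl.
  exists a, (hcomp (hcopair (hid M) (fun x => 0)) pi); split.
    by apply: is_hom_hcomp => //; apply: is_hom_hcopair; [exact: is_hom_hid | exact: is_hom0].
  by rewrite /hcomp /hcopair mulmxA mul_row_col mulmx0 addr0 /hid mulmx1.
- have [a [pi [hompi piv]]] := cogN c _ nzr.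
  exists a, (hcomp (hcopair (fun x => 0) (hid N)) pi); split.
    by apply: is_hom_hcomp => //; apply: is_hom_hcopair; [exact: is_hom0 | exact: is_hom_hid].
  by rewrite /hcomp /hcopair mulmxA mul_row_col mulmx0 add0r /hid mulmx1.
Qed.

Lemma Pa_cogenerated_cover (Y : rep) :
  exists F (g : homfam F Y), [/\ Pa_cogenerated F, is_hom g & is_epi g].
Proof.
pose T := {c : V & 'rV[k]_(rdim Y c)}.
suff cover (L : seq T) : exists F (g : homfam F Y),
    [/\ Pa_cogenerated F, is_hom g & all (fun x => tagged x <= g (tag x))%MS L].
  pose basis := [seq Tagged (fun c => 'rV[k]_(rdim Y c)) (delta_mx 0 t)
                   | c <- enum V, t <- enum 'I_(rdim Y c)].
  have [F [g [cogF homg /all_allpairsP sub_g]]] := cover basis.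
  exists F, g; split => // c; rewrite -sub1mx; apply/row_subP => t.
  by rewrite row1; apply: sub_g; rewrite mem_enum.
elim: L => [|[a m] L [F [g [cogF homg sub_g]]]].
  exists (@Rep _ _ _ src tgt (fun _ => 0%N) (fun _ => 0)), (fun c => 0).
  by split=> // [c v|]; [rewrite thinmx0 eqxx | exact: is_hom0].
have [[phi [homf phiE]] _] := @Pa_univ a Y m.
exists (rep_dsum (P a) F), (hcopair phi g); split.
- by apply: Pa_cogenerated_dsum; [exact: Pa_cogenerated_Pa|].
- exact: is_hom_hcopair.
rewrite /= /hcopair -addsmxE; apply/andP; split.
  by rewrite -phiE; apply: submx_trans (submxMl _ _) (addsmxSl _ _).
by apply: sub_all sub_g => -[c y] /= sub_y; rewrite -addsmxE (submx_trans sub_y) ?addsmxSr.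
Qed.

Lemma projective_Pa_cogenerated (Y : rep) : projective Y -> Pa_cogenerated Y.
Proof.
move=> projY c w nzw.
have [F [g [cogF homg epig]]] := Pa_cogenerated_cover Y.
have [l [homl lg]] := projY F Y g homg epig (hid Y) (is_hom_hid Y).
have nzwl : w *m l c != 0.
  apply: contraNneq nzw => wl0; have := lg c; rewrite /hcomp /hid => lgc.
  by rewrite -[w]mulmx1 -lgc mulmxA wl0 mul0mx.
have [a [pi [hompi piwl]]] := cogF c _ nzwl.
exists a, (hcomp l pi); split; first exact: is_hom_hcomp.
by rewrite /hcomp mulmxA.
Qed.

End IndecomposableProjectives.
End Representations.

Unset Implicit Arguments.
Theorem lemma5p6 (k : closedFieldType) (V E : finType) (src tgt : E -> V)
  (Hacyc : acyclic src tgt) (Hfin : rep_finite k src tgt)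
  (P : V -> rep k src tgt) (eP : forall a : V, 'rV[k]_(rdim (P a) a))
  (HP : forall a : V, is_Pa (eP a))
  (X Y : rep k src tgt) (HX : projective X) (HY : projective Y)
  (f : homfam X Y) (Hf : is_hom f) (Hf0 : hom_nonzero f) :
  exists (i j : V), is_sink src i /\ is_source tgt j /\
    exists (alpha : homfam (P i) X) (beta : homfam Y (P j)),
      [/\ is_hom alpha, is_hom beta,
          is_mono (hcomp (hcomp alpha f) beta)
        & hom_nonzero (hcomp (hcomp alpha f) beta)].
Proof.
have [a0 /rowV0Pn[_ /submxP[x0 ->] x0f]] := Hf0.
have [i sink_i [x xf]] : exists2 i, is_sink src i & exists x : 'rV_(rdim X i), x *m f i != 0.
  apply: (acyclic_reach_sink Hacyc _ (ex_intro _ x0 x0f)) => e [x xf].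
  exists (x *m rmap X e); rewrite -mulmxA Hf mulmxA.
  by rewrite mulmx_free_eq0 ?projective_rmap_free.
have [[alpha [homa alphaE]] _] := HP i X x.
have [a [pi [hompi piw]]] := projective_Pa_cogenerated HP HY xf.
have [j source_j [rho homr rhow]] : exists2 j, is_source tgt j &
    exists2 rho : homfam (P a) (P j), is_hom rho & x *m f i *m pi i *m rho i != 0.
  apply: (acyclic_reach_sink (acyclic_opp Hacyc) _ (a := a)) => [e [rho homr rhow]|].
    have [psi hompsi monopsi] := Pa_arrow_mono HP e.
    exists (hcomp rho psi); first exact: is_hom_hcomp.
    by rewrite /hcomp mulmxA mulmx_free_eq0.
  by exists (hid (P a)); [exact: is_hom_hid | rewrite /hid mulmx1].
have nz : eP i *m hcomp (hcomp alpha f) (hcomp pi rho) i != 0.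
  by rewrite /hcomp !mulmxA alphaE.
exists i, j; split => //; split => //; exists alpha, (hcomp pi rho); split => //.
- exact: is_hom_hcomp.
- exact: (Pa_sink_mono HP sink_i nz).
- by exists i; apply: contraNneq nz => ->; rewrite mulmx0.
Qed.
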